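(* Let $\mathcal{V}$ be a finite set and let $p_{\theta^{(t)}}, p_{\mathrm{sft}}$ be probability distributions on $\mathcal{V}$ with full support. Let $\alpha\in[0,1)$ and define \[ q^{(t)}_y = \frac{p_{\theta^{(t)}}(y)^{1-\alpha}\,p_{\mathrm{sft}}(y)^{\alpha}}{Z}, \qquad Z=\sum_{y'\in\mathcal{V}} p_{\theta^{(t)}}(y')^{1-\alpha}\,p_{\mathrm{sft}}(y')^{\alpha}. \] Then \[ \mathrm{KL}\big(q^{(t)}\,\|\,p_{\theta^{(t)}}\big) \le \frac{\alpha}{1-\alpha}\,\mathrm{KL}\big(p_{\theta^{(t)}}\,\|\,p_{\mathrm{sft}}\big). \]
   Context: $\mathrm{KL}(u\|v)=\sum_{i} u_i\log(u_i/v_i)$ is the Kullback--Leibler divergence. $q^{(t)}$ is the anchor obtained by linear interpolation of logits followed by softmax (a renormalized geometric mean of the two distributions). In the paper these are conditional output distributions for a fixed input $x$, with full support since they are softmax outputs. *)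

From HB Require Import structures.
From mathcomp Require Import all_boot all_order all_algebra.
From mathcomp Require Import all_classical all_reals all_analysis.
Set Implicit Arguments. Unset Strict Implicit. Unset Printing Implicit Defensive.
Import Order.TTheory GRing.Theory Num.Theory.
Local Open Scope ring_scope.

Definition full_support_dist (R : realType) (V : finType) (p : V -> R) : Prop :=
  (forall y, 0 < p y) /\ \sum_(y : V) p y = 1.

Definition KL (R : realType) (V : finType) (u v : V -> R) : R :=
  \sum_(i : V) u i * ln (u i / v i).

Definition anchorZ (R : realType) (V : finType) (a : R) (p s : V -> R) : R :=
  \sum_(y : V) p y `^ (1 - a) * s y `^ a.

Definition anchor (R : realType) (V : finType) (a : R) (p s : V -> R) : V -> R :=
  fun y => p y `^ (1 - a) * s y `^ a / anchorZ a p s.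

From HB Require Import structures.
From mathcomp Require Import all_boot all_order all_algebra.
From mathcomp Require Import all_classical all_reals all_analysis.
From mathcomp Require Import ring lra.
Set Implicit Arguments. Unset Strict Implicit. Unset Printing Implicit Defensive.
Import Order.TTheory GRing.Theory Num.Theory.
Local Open Scope ring_scope.

(* Since
   ln q = (1 - a) ln p + a ln s - ln Z, two exact identities hold:
     (1 - a) KL(q || p) + a KL(q || s) = - ln Z,
     KL(p || q) = a KL(p || s) + ln Z.
   Gibbs' inequality makes KL(q || s) and KL(p || q) nonnegative, whence
   (1 - a) KL(q || p) <= - ln Z <= a KL(p || s). *)

Lemma ln_le_sub1 (R : realType) (x : R) : 0 < x -> ln x <= x - 1.
Proof.
by move=> x_gt0; have := @le_ln1Dx R (x - 1); rewrite [1 + _]addrC subrK; apply; lra.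
Qed.

Lemma KL_lnE (R : realType) (V : finType) (u v : V -> R) :
  (forall y, 0 < u y) -> (forall y, 0 < v y) ->
  KL u v = \sum_y u y * (ln (u y) - ln (v y)).
Proof. by move=> u_gt0 v_gt0; apply: eq_bigr => y _; rewrite ln_div ?posrE. Qed.

Lemma KL_ge0 (R : realType) (V : finType) (u v : V -> R) :
  (forall y, 0 < u y) -> (forall y, 0 < v y) -> \sum_y u y = \sum_y v y ->
  0 <= KL u v.
Proof.
move=> u_gt0 v_gt0 sum_uv.
have <- : \sum_y (u y - v y) = 0 by rewrite sumrB sum_uv subrr.
apply: ler_sum => y _; have uy := u_gt0 y; have vy := v_gt0 y.
have : u y * ln (v y / u y) <= u y * (v y / u y - 1).
  by rewrite ler_pM2l // ln_le_sub1 // divr_gt0.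
rewrite mulrBr mulrCA divff ?gt_eqF // !mulr1 !ln_div ?posrE //; lra.
Qed.

Section Anchor.
Variables (R : realType) (V : finType) (a : R) (p s : V -> R).
Hypotheses (p_dist : full_support_dist p) (s_gt0 : forall y, 0 < s y).

Let p_gt0 : forall y, 0 < p y. Proof. by case: p_dist. Qed.
Let sum_p : \sum_y p y = 1. Proof. by case: p_dist. Qed.
Local Notation q := (anchor a p s).
Local Notation Z := (anchorZ a p s).

Lemma anchor_weight_gt0 y : 0 < p y `^ (1 - a) * s y `^ a.
Proof. by rewrite mulr_gt0 // powR_gt0. Qed.

Lemma anchorZ_gt0 : 0 < Z.
Proof.
case: (pickP (fun _ : V => true)) => [y0 _|V0]; last first.
  by move: sum_p; rewrite big_pred0 // => /esym/eqP; rewrite oner_eq0.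
rewrite /anchorZ (bigD1 y0) //= ltr_pwDl ?anchor_weight_gt0 //.
by apply: sumr_ge0 => y _; apply/ltW/anchor_weight_gt0.
Qed.

Lemma anchor_dist : full_support_dist q.
Proof.
split=> [y|]; first by rewrite divr_gt0 ?anchor_weight_gt0 ?anchorZ_gt0.
by rewrite -mulr_suml divff ?gt_eqF ?anchorZ_gt0.
Qed.

Lemma ln_anchor y : ln (q y) = (1 - a) * ln (p y) + a * ln (s y) - ln Z.
Proof.
rewrite ln_div ?posrE ?anchor_weight_gt0 ?anchorZ_gt0 //.
by rewrite lnM ?posrE ?powR_gt0 // !ln_powR.
Qed.

Let q_gt0 : forall y, 0 < q y. Proof. by case: anchor_dist. Qed.

Lemma KL_anchor_l : (1 - a) * KL q p + a * KL q s = - ln Z.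
Proof.
rewrite !KL_lnE // !mulr_sumr -big_split /=.
transitivity (\sum_y - (q y * ln Z)).
  by apply: eq_bigr => y _; rewrite ln_anchor; ring.
by rewrite sumrN -mulr_suml (proj2 anchor_dist) mul1r.
Qed.

Lemma KL_anchor_r : KL p q = a * KL p s + ln Z.
Proof.
rewrite !KL_lnE // mulr_sumr.
under eq_bigr => y _ do rewrite ln_anchor.
rewrite -[in RHS](mul1r (ln Z)) -[in RHS]sum_p mulr_suml -big_split /=.
by apply: eq_bigr => y _; ring.
Qed.

End Anchor.

Theorem lemma5p3 (R : realType) (V : finType) (ptheta psft : V -> R) (alpha : R) :
  full_support_dist ptheta -> full_support_dist psft ->
  0 <= alpha -> alpha < 1 ->
  KL (anchor alpha ptheta psft) ptheta <= alpha / (1 - alpha) * KL ptheta psft.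
Proof.
move=> p_dist s_dist alpha_ge0 alpha_lt1.
have [s_gt0 sum_s] := s_dist.
have [q_gt0 sum_q] := anchor_dist alpha p_dist s_gt0.
have [p_gt0 sum_p] := p_dist.
have KL_qs_ge0 := KL_ge0 q_gt0 s_gt0 (etrans sum_q (esym sum_s)).
have KL_pq_ge0 := KL_ge0 p_gt0 q_gt0 (etrans sum_p (esym sum_q)).
rewrite KL_anchor_r // in KL_pq_ge0.
rewrite mulrAC ler_pdivlMr ?subr_gt0 // mulrC.
apply: (@le_trans _ _ (- ln (anchorZ alpha ptheta psft))).
  by rewrite -(KL_anchor_l alpha p_dist s_gt0) lerDl mulr_ge0.
by rewrite -subr_ge0 opprK.
Qed.
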